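(* Let $\mathcal{B}$ be a real Banach space having a smooth pre-dual space $\mathcal{B}_*$, let $\nu_j\in\mathcal{B}_*$, $j\in\mathbb{N}_m$, be linearly independent, and let $\mathbf{y}=[y_j:j\in\mathbb{N}_m]\in\mathbb{R}^m$. For $\mathbf{c}\in\mathbb{R}^m$ put $\mathcal{L}^*(\mathbf{c}):=\sum_{j\in\mathbb{N}_m}c_j\nu_j$. Then $$\hat f:=\|\mathcal{L}^*(\mathbf{c})\|_{\mathcal{B}_*}\,\mathcal{G}_*(\mathcal{L}^*(\mathbf{c}))$$ is a solution of the minimum norm interpolation problem with data $\mathbf{y}$ if and only if $\mathbf{c}$ solves the system $$\big\langle\nu_k,\ \|\mathcal{L}^*(\mathbf{c})\|_{\mathcal{B}_*}\mathcal{G}_*(\mathcal{L}^*(\mathbf{c}))\big\rangle_{\mathcal{B}}=y_k,\quad k\in\mathbb{N}_m.$$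
   Context: $\mathcal{B}$ is a real Banach space with dual $\mathcal{B}^*$ and pairing $\langle\nu,f\rangle_{\mathcal{B}}:=\nu(f)$; $\mathbb{N}_m:=\{1,\dots,m\}$; $\mathcal{L}(f):=[\langle\nu_j,f\rangle_{\mathcal{B}}:j\in\mathbb{N}_m]$ (so $\mathcal{L}^*$ above is its adjoint), $\mathcal{M}_{\mathbf{y}}:=\{f\in\mathcal{B}:\mathcal{L}(f)=\mathbf{y}\}$; a solution of the minimum norm interpolation problem with data $\mathbf{y}$ is an $\hat f\in\mathcal{M}_{\mathbf{y}}$ with $\|\hat f\|_{\mathcal{B}}=\inf\{\|f\|_{\mathcal{B}}:f\in\mathcal{M}_{\mathbf{y}}\}$. A normed space $\mathcal{B}_*$ is a pre-dual of $\mathcal{B}$ if $(\mathcal{B}_* )^*=\mathcal{B}$, with $\langle\nu,f\rangle_{\mathcal{B}}=f(\nu)$ for $\nu\in\mathcal{B}_*$. $\mathcal{B}_*$ smooth means its norm is Gâteaux differentiable at every nonzero $\nu$; $\mathcal{G}_*(\nu)\in(\mathcal{B}_* )^*=\mathcal{B}$ denotes the Gâteaux derivative of $\|\cdot\|_{\mathcal{B}_*}$ at $\nu\neq0$, i.e. $\mathcal{G}_*(\nu)(\mu)=\lim_{t\to0}(\|\nu+t\mu\|_{\mathcal{B}_*}-\|\nu\|_{\mathcal{B}_*})/t$, and $\mathcal{G}_*(0):=0$. *)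

From HB Require Import structures.
From mathcomp Require Import all_boot all_order all_algebra.
From mathcomp Require Import all_classical all_reals all_analysis.
Set Implicit Arguments.
Unset Strict Implicit.
Unset Printing Implicit Defensive.
Import Order.TTheory GRing.Theory Num.Theory.
Import numFieldNormedType.Exports.
Local Open Scope classical_set_scope.
Local Open Scope ring_scope.

(* The pre-dual B_* is modelled as a real normed space V; the Banach space
   B = (B_* )^* is modelled as the bounded linear functionals V -> R with the
   dual (operator) norm; the pairing <nu, f>_B is f nu. *)
Section Defs.
Context {R : realType} {V : normedModType R}.

Definition bounded_linear_functional (f : V -> R) : Prop :=
  (forall (a : R) (x y : V), f (a *: x + y) = a * f x + f y) /\
  exists M : R, forall x : V, `|f x| <= M * `|x|.

Definition dual_norm (f : V -> R) : R :=
  sup [set `|f x| | x in [set x : V | `|x| <= 1]].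

Definition gateaux_quotient (nu mu : V) (t : R) : R :=
  (`|nu + t *: mu| - `|nu|) / t.

Definition gateaux_norm_deriv (nu : V) : V -> R :=
  if nu == 0 then (fun _ => 0)
  else fun mu => lim (gateaux_quotient nu mu @ (0 : R)^').

Definition smooth_space : Prop :=
  forall nu : V, nu != 0 ->
    (forall mu : V, cvg (gateaux_quotient nu mu @ (0 : R)^')) /\
    bounded_linear_functional (gateaux_norm_deriv nu).

Definition lin_indep (m : nat) (nu : 'I_m -> V) : Prop :=
  forall c : 'I_m -> R, \sum_(j < m) c j *: nu j = 0 -> forall j, c j = 0.

Definition Lstar (m : nat) (nu : 'I_m -> V) (c : 'I_m -> R) : V :=
  \sum_(j < m) c j *: nu j.

Definition interp_set (m : nat) (nu : 'I_m -> V) (y : 'I_m -> R) : set (V -> R) :=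
  [set f | bounded_linear_functional f /\ forall j, f (nu j) = y j].

Definition is_min_norm_interp (m : nat) (nu : 'I_m -> V) (y : 'I_m -> R)
  (fhat : V -> R) : Prop :=
  interp_set nu y fhat /\
  dual_norm fhat = inf [set dual_norm f | f in interp_set nu y].

End Defs.

From HB Require Import structures.
From mathcomp Require Import all_boot all_order all_algebra.
From mathcomp Require Import all_classical all_reals all_analysis.
From mathcomp Require Import lra.
Import Order.TTheory GRing.Theory Num.Theory.
Import numFieldNormedType.Exports.
Local Open Scope classical_set_scope.
Local Open Scope ring_scope.

(* Write w := L^*(c) and fhat := |w| G_*(w).  Since the norm of
   the pre-dual is 1-Lipschitz, every Gateaux difference quotient is bounded
   by |mu|, hence |G_*(w) mu| <= |mu|; and G_*(w) w = |w| because the norm is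
   positively homogeneous.  Thus fhat is a bounded linear functional with
   dual norm |w| which "norms" w: fhat w = |w|^2.
   "Only if" is immediate: a solution interpolates the data.
   "If": when fhat interpolates, every interpolant f takes the same value
   f w = sum_j c_j y_j = fhat w = |w|^2 at w (this is where w lying in the span
   of the nu_j matters), so |w| <= dual_norm f.  Hence fhat attains the
   infimum of the dual norms over the interpolants. *)

Lemma inf_attained {R : realType} (S : set R) (x : R) :
  S x -> (forall s, S s -> x <= s) -> inf S = x.
Proof.
move=> Sx lbx; apply/le_anti/andP; split.
  by apply: ge_inf => //; exists x => s /lbx.
by apply: lb_le_inf => //; exists x.
Qed.

Section LinearFunctionals.
Context {R : realType} {V : normedModType R}.

Definition linear_functional (f : V -> R) : Prop :=
  forall (a : R) (x y : V), f (a *: x + y) = a * f x + f y.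

Variable f : V -> R.
Hypothesis f_lin : linear_functional f.

Lemma linear_functional0 : f 0 = 0.
Proof.
have := f_lin 1 0 0; rewrite scale1r addr0 mul1r => f0.
by apply: (addIr (f 0)); rewrite add0r -f0.
Qed.

Lemma linear_functionalZ (a : R) (x : V) : f (a *: x) = a * f x.
Proof. by have := f_lin a x 0; rewrite addr0 linear_functional0 addr0. Qed.

Lemma linear_functional_Lstar (m : nat) (nu : 'I_m -> V) (c : 'I_m -> R) :
  f (Lstar nu c) = \sum_(j < m) c j * f (nu j).
Proof.
rewrite /Lstar; elim/big_rec2: _ => [|j a b _ <-]; first exact: linear_functional0.
exact: f_lin.
Qed.

End LinearFunctionals.

Section DualNorm.
Context {R : realType} {V : normedModType R}.
Implicit Types (f : V -> R) (x : V).

Lemma dual_norm_le f (K : R) :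
  0 <= K -> (forall x, `|f x| <= K * `|x|) -> dual_norm f <= K.
Proof.
move=> K0 fK; apply: ge_sup; first by exists `|f 0|, 0 => //=; rewrite normr0.
move=> _ [x /= x1 <-]; apply: le_trans (fK x) _.
by rewrite -{2}(mulr1 K) ler_wpM2l.
Qed.

Lemma dual_norm_ge f x :
  bounded_linear_functional f -> `|x| <= 1 -> `|f x| <= dual_norm f.
Proof.
move=> [_ [M fM]] x1; apply: ub_le_sup; last by exists x.
exists `|M| => _ [z /= z1 <-]; apply: le_trans (fM z) _.
apply: le_trans (ler_norm _) _; rewrite normrM normr_id.
by rewrite -[X in _ <= X]mulr1 ler_wpM2l.
Qed.

Lemma dual_norm_ge_norming f (w : V) :
  bounded_linear_functional f -> f w = `|w| * `|w| -> `|w| <= dual_norm f.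
Proof.
move=> fB fw; have [->|w0] := eqVneq w 0.
  by rewrite normr0; apply: le_trans (dual_norm_ge f 0 fB _); rewrite ?normr0.
have norm_w_neq0 : `|w| != 0 by rewrite normr_eq0.
have unit_w : `| `|w|^-1 *: w| <= 1 by rewrite normrZ normfV normr_id mulVf.
apply: le_trans (dual_norm_ge f _ fB unit_w).
by rewrite (linear_functionalZ _ fB.1) fw mulKf // normr_id.
Qed.

End DualNorm.

Section GateauxDerivative.
Context {R : realType} {V : normedModType R}.
Implicit Types nu mu : V.

Lemma gateaux_quotient_bound nu mu (t : R) : `|gateaux_quotient nu mu t| <= `|mu|.
Proof.
rewrite /gateaux_quotient; have [->|t0] := eqVneq t 0.
  by rewrite invr0 mulr0 normr0.
rewrite normrM normfV ler_pdivrMr ?normr_gt0 //.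
by apply: le_trans (ler_dist_dist _ _) _; rewrite addrC addKr normrZ mulrC.
Qed.

Lemma gateaux_quotient_self nu :
  \forall t \near (0 : R)^', gateaux_quotient nu nu t = `|nu|.
Proof.
near=> t.
have t0 : t != 0 by near: t; exact: nbhs_dnbhs_neq.
have t1 : `|t| < 1.
  by near: t; apply: nbhs_dnbhs; exists 1 => //= z; rewrite /ball /= sub0r normrN.
have pos_t : `|1 + t| = 1 + t.
  by apply/ger0_norm; move: t1; rewrite ltr_norml => /andP[? _]; lra.
rewrite /gateaux_quotient -{1}(scale1r nu) -scalerDl normrZ pos_t.
by rewrite (mulrDl 1 t) mul1r addrC addKr mulrC mulKf.
Unshelve. all: by end_near.
Qed.

Lemma gateaux_deriv_self nu : nu != 0 -> gateaux_norm_deriv nu nu = `|nu|.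
Proof.
move=> nu0; rewrite /gateaux_norm_deriv (negbTE nu0).
exact: lim_near_cst (gateaux_quotient_self nu).
Qed.

Definition norming_functional (w : V) : V -> R :=
  fun mu => `|w| * gateaux_norm_deriv w mu.

Lemma norming_functional_self w : norming_functional w w = `|w| * `|w|.
Proof.
have [->|w0] := eqVneq w 0; last by rewrite /norming_functional gateaux_deriv_self.
by rewrite /norming_functional normr0 !mul0r.
Qed.

(* If the norming functional of w = L^*(c) interpolates the data, every
   interpolant agrees with it at w, hence has dual norm at least |w|. *)
Lemma interp_dual_norm_lower_bound {m : nat} {nu : 'I_m -> V} {y c : 'I_m -> R}
    {f : V -> R} :
  interp_set nu y (norming_functional (Lstar nu c)) -> interp_set nu y f ->
  `|Lstar nu c| <= dual_norm f.
Proof.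
move=> [fhB fhy] [fB fy]; apply: dual_norm_ge_norming => //.
rewrite -norming_functional_self (linear_functional_Lstar _ fB.1).
rewrite (linear_functional_Lstar _ fhB.1).
by apply: eq_bigr => j _; rewrite fy fhy.
Qed.

Hypothesis smooth : smooth_space (V := V).

Lemma gateaux_deriv_bounded_linear nu :
  bounded_linear_functional (gateaux_norm_deriv nu).
Proof.
have [->|nu0] := eqVneq nu 0; last exact: (smooth nu nu0).2.
rewrite /gateaux_norm_deriv eqxx; split; first by move=> *; rewrite mulr0 addr0.
by exists 0 => x; rewrite normr0 mul0r.
Qed.

(* |G_*(nu) mu| <= |mu|: the limit inherits the bound on the quotients. *)
Lemma gateaux_deriv_bound nu mu : `|gateaux_norm_deriv nu mu| <= `|mu|.
Proof.
rewrite /gateaux_norm_deriv; case: ifPn => [_|nu0]; first by rewrite normr0.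
have cvg_q := (smooth nu nu0).1 mu.
have q_bound t : - `|mu| <= gateaux_quotient nu mu t <= `|mu|.
  by rewrite -ler_norml gateaux_quotient_bound.
rewrite ler_norml; apply/andP; split.
  by apply: limr_ge => //; apply: nearW => t; have /andP[] := q_bound t.
by apply: limr_le => //; apply: nearW => t; have /andP[] := q_bound t.
Qed.

Lemma norming_functional_bounded_linear w :
  bounded_linear_functional (norming_functional w).
Proof.
have [G_lin _] := gateaux_deriv_bounded_linear w.
split; first by move=> a x z; rewrite /norming_functional G_lin mulrDr mulrCA.
exists `|w| => x.
by rewrite /norming_functional normrM normr_id ler_wpM2l ?gateaux_deriv_bound.
Qed.

Lemma dual_norm_norming_functional w : dual_norm (norming_functional w) = `|w|.
Proof.
apply/le_anti/andP; split.
  apply: dual_norm_le => // x.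
  by rewrite /norming_functional normrM normr_id ler_wpM2l ?gateaux_deriv_bound.
exact: dual_norm_ge_norming (norming_functional_bounded_linear w)
  (norming_functional_self w).
Qed.

End GateauxDerivative.

Theorem mainTheorem9 (R : realType) (V : normedModType R) (m : nat)
  (nu : 'I_m -> V) (y : 'I_m -> R) (c : 'I_m -> R) :
  smooth_space (V := V) ->
  lin_indep nu ->
  is_min_norm_interp nu y
    (fun mu => `|Lstar nu c| * gateaux_norm_deriv (Lstar nu c) mu) <->
  (forall k : 'I_m,
     `|Lstar nu c| * gateaux_norm_deriv (Lstar nu c) (nu k) = y k).
Proof.
move=> smooth _.
rewrite -/(norming_functional (Lstar nu c)).
split; first by case=> [[_ interp] _].
move=> interp.
have fh_interp : interp_set nu y (norming_functional (Lstar nu c)).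
  by split => //; exact: norming_functional_bounded_linear.
split => //; rewrite (dual_norm_norming_functional smooth); apply/esym.
apply: inf_attained.
  exists (norming_functional (Lstar nu c)) => //.
  exact: dual_norm_norming_functional.
move=> _ [f f_interp <-].
exact: interp_dual_norm_lower_bound fh_interp f_interp.
Qed.
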